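(* Let $\alpha\in\ell^0(\mathbb{Z})$ with $\operatorname{supp}\alpha=I$, let $u=\sum_{i\in\mathbb{Z}}\alpha_i e_i$ be the source, $v=Ku$, and let $v^\varepsilon$ be noisy data with $\|v^\varepsilon-v\|\le\varepsilon$, with noise-to-signal ratio \[ r_{\varepsilon/\alpha}:=\frac{\sup_{i\in\mathbb{Z}}|\langle v^\varepsilon-v,d_i\rangle|}{\min_{i\in I}|\alpha_i|\,\|Ke_i\|}<\frac12. \] Suppose the $\varepsilon$ERC holds, i.e. $\sup_{i\in I}\sum_{j\in I,\,j\neq i}|\langle d_i,d_j\rangle|<1$ and \[ \sup_{d\in\mathscr{D}(I^\complement)}\big\|(DP_I)^\dagger d\big\|_{\ell^1}<1-2\,r_{\varepsilon/\alpha}\,\frac{1}{1-\sup_{i\in I}\sum_{j\in I,\,j\neq i}|\langle d_i,d_j\rangle|}. \] Then there exists a constant $C>0$ such that the approximate solution $\hat\alpha$ determined by OMP satisfies $\|\hat\alpha-\alpha\|_{\ell^1}\le C\varepsilon$.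
   Context: $B$ is a Banach space, $H$ a real Hilbert space, and $K:B\to H$ a bounded, injective, linear operator. $\mathscr{E}=\{e_i\}_{i\in\mathbb{Z}}\subset B$ is a family of unit-norm vectors, $d_i:=Ke_i/\|Ke_i\|$, $\mathscr{D}=\{d_i\}$, $\mathscr{E}(J)=\{e_i:i\in J\}$, $\mathscr{D}(J)=\{d_i:i\in J\}$ for $J\subset\mathbb{Z}$, $I^\complement=\mathbb{Z}\setminus I$. $D:\ell^1\to H$, $D\beta=\sum_i\beta_id_i$; $P_J$ is the coordinate projection onto $J$ in $\ell^1$; $(DP_I)^\dagger$ is the pseudoinverse of $DP_I$. Orthogonal Matching Pursuit (OMP) with parameter $\varepsilon$ on data $v^\varepsilon$: set $k=0$, $I^0=\emptyset$, $r^0=v^\varepsilon$, $\hat u^0=0$; while $\|r^k\|>\varepsilon$: $k:=k+1$, choose $i_k\in\operatorname{argsup}_i|\langle r^{k-1},d_i\rangle|$, $I^k=I^{k-1}\cup\{i_k\}$, $\hat u^k\in\operatorname{argmin}\{\|v^\varepsilon-K\hat u\|^2:\hat u\in\operatorname{span}\mathscr{E}(I^k)\}$, $r^k=v^\varepsilon-K\hat u^k$. The approximate solution $\hat\alpha$ is the coefficient vector of the final iterate, $\hat u=\sum_i\hat\alpha_ie_i$ (with $\hat\alpha_i=0$ for non-selected indices). *)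

From HB Require Import structures.
From Stdlib Require Import ClassicalEpsilon.
From mathcomp Require Import all_boot all_order all_algebra.
From mathcomp Require Import all_classical all_reals all_analysis.
Set Implicit Arguments. Unset Strict Implicit. Unset Printing Implicit Defensive.
Import Order.TTheory GRing.Theory Num.Theory.
Import numFieldNormedType.Exports.
Local Open Scope classical_set_scope.
Local Open Scope ring_scope.

Section Defs.
Variables (R : realType) (B H : normedModType R).

Definition is_inner_product (ip : H -> H -> R) : Prop :=
  (forall x y, ip x y = ip y x) /\
  (forall (a : R) x y z, ip (a *: x + y) z = a * ip x z + ip y z) /\
  (forall x, `|x| ^+ 2 = ip x x).

Definition dict (K : B -> H) (e : int -> B) (i : int) : H :=
  (`|K (e i)|)^-1 *: K (e i).

Definition l1norm (x : int -> R) : \bar R :=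
  (\esum_(i in [set: int]) (`|x i|)%:E)%E.

(* noise-to-signal ratio r_{eps/alpha} ; I : list of the (nonempty) support *)
Definition nsr (ip : H -> H -> R) (K : B -> H) (e : int -> B)
    (alpha : int -> R) (I : seq int) (w : H) : R :=
  sup (range (fun i => `|ip w (dict K e i)|)) /
  inf [set `|alpha i| * `|K (e i)| | i in [set i | i \in I]].

Definition cumcoh (ip : H -> H -> R) (d : int -> H) (I : seq int) : R :=
  sup [set \sum_(j <- I | j != i) `|ip (d i) (d j)| | i in [set i | i \in I]].

(* beta = (D P_I)^dagger h : beta supported on I and D P_I beta is the
   orthogonal projection of h onto span D(I) (normal equations). *)
Definition pinv_spec (ip : H -> H -> R) (d : int -> H) (I : seq int) (h : H)
    (beta : int -> R) : Prop :=
  (forall i, i \notin I -> beta i = 0) /\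
  (forall j, j \in I -> ip (h - \sum_(i <- I) beta i *: d i) (d j) = 0).

Definition pinv (ip : H -> H -> R) (d : int -> H) (I : seq int) (h : H) : int -> R :=
  epsilon (inhabits (fun _ : int => 0)) (pinv_spec ip d I h).

Definition erc_sup (ip : H -> H -> R) (d : int -> H) (I : seq int) : \bar R :=
  ereal_sup [set l1norm (pinv ip d I (d j)) | j in [set j | j \notin I]].

(* A complete run of OMP with parameter eps on data veps, performing n
   iterations, selecting indices idx = [i_1; ...; i_n], with coefficient
   vectors beta k (supported on I^k) of the iterates
   uhat^k = sum_{i in I^k} beta k i e_i. *)
Definition OMP_run (ip : H -> H -> R) (K : B -> H) (e : int -> B) (eps : R)
    (veps : H) (n : nat) (idx : seq int) (beta : nat -> int -> R) : Prop :=
  let d := dict K e in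
  let S k := undup (take k idx) in
  let uhat k := \sum_(i <- S k) beta k i *: e i in
  let res k := veps - K (uhat k) in
  [/\ size idx = n,
      (forall k, (k <= n)%N -> forall i, i \notin take k idx -> beta k i = 0),
      (forall k, (k < n)%N -> eps < `|res k|) /\ `|res n| <= eps,
      (forall k, (k < n)%N -> forall j,
          `|ip (res k) (d j)| <= `|ip (res k) (d (nth 0 idx k))|)
    & (forall k, (0 < k <= n)%N -> forall c : int -> R,
          `|veps - K (uhat k)| ^+ 2 <= `|veps - K (\sum_(i <- S k) c i *: e i)| ^+ 2)].

End Defs.

From Pilot Require Import Defs.
From HB Require Import structures.
From Stdlib Require Import ClassicalEpsilon.
From mathcomp Require Import all_boot all_order all_algebra.
From mathcomp Require Import all_classical all_reals all_analysis.
From mathcomp Require Import ring lra.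
Set Implicit Arguments. Unset Strict Implicit. Unset Printing Implicit Defensive.
Import Order.TTheory GRing.Theory Num.Theory.
Import numFieldNormedType.Exports.
Local Open Scope classical_set_scope.
Local Open Scope ring_scope.

(* As long as every selected index lies in the support I, the OMP residual is
   w + sum_{l in I} g_l d_l with w = v^eps - v, and some i0 in I is still
   unselected, so g_{i0} = alpha_{i0} ||K e_{i0}||.  Cumulative coherence
   mu < 1 makes the Gram matrix of D(I) diagonally dominant, so the residual
   correlates with D(I) at least (1 - mu) min |alpha_i| ||K e_i|| - nu, where
   nu bounds the noise correlations; the ERC transfers correlations from D(I)
   to any d_s with s outside I with a factor smaller than
   1 - 2 r/(1 - mu).  Both together rule out selecting s.  Once OMP stops,
   the coefficient error lives on I and its synthesis has norm at most
   2 eps, which diagonal dominance again converts into an l^1 bound. *)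

Section InnerProduct.
Variables (R : realType) (H : normedModType R) (ip : H -> H -> R).
Hypothesis hip : is_inner_product ip.

Lemma ipC x y : ip x y = ip y x.
Proof. by case: hip. Qed.

Lemma ipxx x : ip x x = `|x| ^+ 2.
Proof. by case: hip => _ [_ ->]. Qed.

Lemma ip0l z : ip 0 z = 0.
Proof.
case: hip => _ [lin _]; have := lin 1 0 0 z.
by rewrite scaler0 addr0 mul1r => /(congr1 (fun t => t - ip 0 z)); rewrite subrr addrK.
Qed.

Lemma ip0r z : ip z 0 = 0.
Proof. by rewrite ipC ip0l. Qed.

Lemma ipDl x y z : ip (x + y) z = ip x z + ip y z.
Proof. by case: hip => _ [lin _]; have := lin 1 x y z; rewrite scale1r mul1r. Qed.

Lemma ipZl a x z : ip (a *: x) z = a * ip x z.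
Proof. by case: hip => _ [lin _]; have := lin a x 0 z; rewrite addr0 ip0l addr0. Qed.

Lemma ipBl x y z : ip (x - y) z = ip x z - ip y z.
Proof. by rewrite ipDl -scaleN1r ipZl mulN1r. Qed.

Lemma ipDr x y z : ip z (x + y) = ip z x + ip z y.
Proof. by rewrite ipC ipDl !(ipC z). Qed.

Lemma ipZr a x z : ip z (a *: x) = a * ip z x.
Proof. by rewrite ipC ipZl ipC. Qed.

Lemma ipBr x y z : ip z (x - y) = ip z x - ip z y.
Proof. by rewrite ipC ipBl !(ipC z). Qed.

Lemma ip_suml (T : Type) (s : seq T) (F : T -> H) z :
  ip (\sum_(i <- s) F i) z = \sum_(i <- s) ip (F i) z.
Proof.
elim: s => [|x s IH]; first by rewrite !big_nil ip0l.
by rewrite !big_cons ipDl IH.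
Qed.

Lemma ip_sumr (T : Type) (s : seq T) (F : T -> H) z :
  ip z (\sum_(i <- s) F i) = \sum_(i <- s) ip z (F i).
Proof. by rewrite ipC ip_suml; apply: eq_bigr => i _; rewrite ipC. Qed.

Lemma ipxx_eq0 x : ip x x = 0 -> x = 0.
Proof. by rewrite ipxx => /eqP; rewrite sqrf_eq0 normr_eq0 => /eqP. Qed.

Lemma ip_unit_le x y : `|y| = 1 -> `|ip x y| <= `|x|.
Proof.
move=> y1; set p := ip x y.
have : 0 <= ip (x - p *: y) (x - p *: y) by rewrite ipxx sqr_ge0.
rewrite ipBl !ipBr !ipZl !ipZr !ipxx y1 (ipC y x) -/p => ge0.
have sq_le : `|p| ^+ 2 <= `|x| ^+ 2 by rewrite real_normK ?num_real //; lra.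
by have := normr_ge0 x; have := normr_ge0 p; nra.
Qed.

(* Orthogonal projection onto span {d_i | i in L}, by induction on L:
   orthogonalise d_x against the previous span (Gram-Schmidt step). *)
Lemma normal_equations_solvable (d : int -> H) (L : seq int) (h : H) :
  uniq L -> exists b : int -> R, pinv_spec ip d L h b.
Proof.
elim: L h => [|x L IH] h.
  by move=> _; exists (fun _ => 0); split => // j; rewrite in_nil.
move=> /= /andP[xL uL].
have [b1 [b1_supp b1_orth]] := IH h uL.
have [b2 [b2_supp b2_orth]] := IH (d x) uL.
set r1 := h - \sum_(i <- L) b1 i *: d i.
set r2 := d x - \sum_(i <- L) b2 i *: d i.
set t := ip r1 r2 / ip r2 r2.
have r1_orth_r2 : ip (r1 - t *: r2) r2 = 0.
  rewrite ipBl ipZl; have [r2r2|nz] := eqVneq (ip r2 r2) 0.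
    by rewrite r2r2 mulr0 subr0 (ipxx_eq0 r2r2) ip0r.
  by rewrite /t divfK // subrr.
exists (fun i => if i == x then t else b1 i - t * b2 i); split.
  move=> i; rewrite in_cons negb_or => /andP[ix iL].
  by rewrite (negPf ix) b1_supp // b2_supp // mulr0 subr0.
have -> : h - \sum_(i <- x :: L) (if i == x then t else b1 i - t * b2 i) *: d i
    = r1 - t *: r2.
  rewrite big_cons eqxx (eq_big_seq (fun i => b1 i *: d i - t *: (b2 i *: d i))).
    rewrite sumrB -scaler_sumr /r1 /r2 scalerBr.
    by rewrite !opprD !opprK !addrA (addrAC h (- (t *: d x))).
  move=> i iL; have -> : (i == x) = false.
    by apply/negP => /eqP ix; move: xL; rewrite -ix iL.
  by rewrite scalerBl scalerA.
have orthL j : j \in L -> ip (r1 - t *: r2) (d j) = 0.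
  by move=> jL; rewrite ipBl ipZl b1_orth // b2_orth // mulr0 subr0.
move=> j; rewrite in_cons => /orP[/eqP ->|]; last exact: orthL.
rewrite -[d x](subrK (\sum_(i <- L) b2 i *: d i)) -/r2 ipDr r1_orth_r2 add0r.
by rewrite ip_sumr big1_seq // => i /andP[_ iL]; rewrite ipZr orthL // mulr0.
Qed.

Lemma pinvP (d : int -> H) (L : seq int) (h : H) :
  uniq L -> pinv_spec ip d L h (Defs.pinv ip d L h).
Proof. by move=> uL; apply: epsilon_spec; apply: normal_equations_solvable. Qed.

End InnerProduct.

Lemma exists_argmax_seq (R : realDomainType) (T : eqType) (f : T -> R)
    (s : seq T) :
  s != [::] -> exists2 m, m \in s & forall k, k \in s -> f k <= f m.
Proof.
elim: s => // x s IH _.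
have [->|s_nil] := eqVneq s [::].
  by exists x; rewrite ?mem_head // => k; rewrite inE => /eqP ->.
have [m ms hm] := IH s_nil.
have [le_xm|lt_mx] := leP (f x) (f m).
  exists m; first by rewrite inE ms orbT.
  by move=> k; rewrite inE => /orP[/eqP ->|/hm].
exists x; first exact: mem_head.
by move=> k; rewrite inE => /orP[/eqP ->//|/hm le_km]; rewrite (le_trans le_km) ?ltW.
Qed.

Lemma big_uniq_subset (V : zmodType) (S I : seq int) (F : int -> V) :
  uniq S -> uniq I -> {subset S <= I} ->
  (forall l, l \in I -> l \notin S -> F l = 0) ->
  \sum_(l <- S) F l = \sum_(l <- I) F l.
Proof.
move=> uS uI sSI F0.
rewrite [RHS](bigID (fun l => l \in S)) /= [X in _ = _ + X]big1_seq ?addr0.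
  rewrite -[RHS]big_filter; apply: perm_big; apply: uniq_perm => //.
    exact: filter_uniq.
  by move=> l; rewrite mem_filter; case lS: (l \in S) => //=; rewrite sSI.
by move=> l /andP[lS lI]; apply: F0.
Qed.

Lemma l1norm_seq (R : realType) (f : int -> R) (I : seq int) : uniq I ->
  (forall i, i \notin I -> f i = 0) -> l1norm f = (\sum_(i <- I) `|f i|)%:E.
Proof.
move=> uI f0; rewrite /l1norm.
have -> : (\esum_(i in [set: int]) (`|f i|)%:E)%E
          = (\esum_(i in [set` I]) (`|f i|)%:E)%E.
  rewrite [in RHS]esum_mkcond; apply: eq_esum => i _.
  case: ifPn => // /negP iI; rewrite f0 ?normr0 //.
  by apply/negP => iI'; apply: iI; rewrite inE.
rewrite esum_fset; first by rewrite -fsbig_seq // sumEFin.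
  exact: finite_seq.
by move=> i _; rewrite lee_fin.
Qed.

Section Coherence.
Variables (R : realType) (H : normedModType R) (ip : H -> H -> R).
Hypothesis hip : is_inner_product ip.
Variables (d : int -> H) (I : seq int).
Hypotheses (uI : uniq I) (d_unit : forall i, i \in I -> `|d i| = 1).
Local Notation mu := (cumcoh ip d I).

Lemma sum_coh_le_cumcoh i : i \in I ->
  \sum_(j <- I | j != i) `|ip (d i) (d j)| <= mu.
Proof.
move=> iI; apply: ub_le_sup; last by exists i.
exists (\sum_(i <- I) \sum_(j <- I | j != i) `|ip (d i) (d j)|).
move=> _ [k kI <-] /=; rewrite (bigD1_seq k) //= lerDl.
by rewrite big_seq_cond; apply: sumr_ge0 => l _; apply: sumr_ge0.
Qed.

Hypothesis mu_le1 : mu <= 1.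

(* Diagonal dominance, applied at an index of maximal |y_m|. *)
Lemma cumcoh_coef_le (y : int -> R) (Q : R) :
  (forall i, i \in I -> `|ip (\sum_(k <- I) y k *: d k) (d i)| <= Q) ->
  forall k, k \in I -> (1 - mu) * `|y k| <= Q.
Proof.
move=> hQ k kI.
have [m mI hm] : exists2 m, m \in I & forall k, k \in I -> `|y k| <= `|y m|.
  by apply: exists_argmax_seq; apply: contraTneq kI => ->.
set S := \sum_(j <- I | j != m) y j * ip (d j) (d m).
have ip_m : ip (\sum_(k <- I) y k *: d k) (d m) = y m + S.
  rewrite (ip_suml hip) (bigD1_seq m) //= (ipZl hip) (ipxx hip) d_unit // expr1n mulr1.
  by congr (_ + _); apply: eq_bigr => j _; rewrite (ipZl hip).
have S_le : `|S| <= `|y m| * mu.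
  apply: (le_trans (ler_norm_sum _ _ _)).
  apply: (le_trans _ (ler_wpM2l (normr_ge0 _) (sum_coh_le_cumcoh mI))).
  rewrite mulr_sumr big_seq_cond [X in _ <= X]big_seq_cond.
  apply: ler_sum => j /andP[jI _]; rewrite normrM (ipC hip (d j)).
  by apply: ler_wpM2r => //; apply: hm.
have ym_le : `|y m| <= Q + `|y m| * mu.
  have := hQ m mI; rewrite ip_m => le_Q.
  have := ler_normB (y m + S) S; rewrite addrK => le_ym.
  by apply: (le_trans le_ym); apply: lerD.
have : (1 - mu) * `|y k| <= (1 - mu) * `|y m|.
  by apply: ler_wpM2l; [rewrite subr_ge0 | apply: hm].
lra.
Qed.

(* The same bound for w + sum g_l d_l: split w into its projection onto
   span D(I), whose coefficients are controlled by nu, and an orthogonal part. *)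
Lemma cumcoh_coef_le_noisy (w : H) (g : int -> R) (nu Q : R) :
  (forall i, i \in I -> `|ip w (d i)| <= nu) ->
  (forall i, i \in I ->
     `|ip (w + \sum_(l <- I) g l *: d l) (d i)| <= Q) ->
  forall k, k \in I -> (1 - mu) * `|g k| <= Q + nu.
Proof.
move=> w_le res_le k kI.
have [eta [_ eta_orth]] := normal_equations_solvable hip d w uI.
have eta_ip i : i \in I -> ip (\sum_(l <- I) eta l *: d l) (d i) = ip w (d i).
  by move=> iI; apply/eqP; rewrite eq_sym -subr_eq0 -(ipBl hip) eta_orth.
have eta_le : (1 - mu) * `|eta k| <= nu.
  by apply: (@cumcoh_coef_le eta nu _ k kI) => i iI; rewrite eta_ip // w_le.
have c_le : (1 - mu) * `|eta k + g k| <= Q.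
  apply: (@cumcoh_coef_le (fun l => eta l + g l) Q _ k kI) => i iI.
  suff -> : ip (\sum_(l <- I) (eta l + g l) *: d l) (d i)
            = ip (w + \sum_(l <- I) g l *: d l) (d i) by exact: res_le.
  under eq_bigr => l _ do rewrite scalerDl.
  by rewrite big_split /= !(ipDl hip) eta_ip.
have := ler_normB (eta k + g k) (eta k); rewrite addrC addKr.
have : 0 <= 1 - mu by rewrite subr_ge0.
nra.
Qed.

(* Since res - w lies in span D(I), the normal equations for b give
   <res, d_s> = <w, d_s> + sum_i b_i (<res, d_i> - <w, d_i>). *)
Lemma pinv_ip_le (s : int) (b : int -> R) (w : H) (g : int -> R) (nu Q : R) :
  pinv_spec ip d I (d s) b ->
  (forall i, i \in I -> `|ip w (d i)| <= nu) -> `|ip w (d s)| <= nu ->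
  (forall i, i \in I ->
     `|ip (w + \sum_(l <- I) g l *: d l) (d i)| <= Q) ->
  `|ip (w + \sum_(l <- I) g l *: d l) (d s)|
    <= nu + (\sum_(i <- I) `|b i|) * (Q + nu).
Proof.
move=> [_ b_orth] w_le ws_le res_le.
set res := w + _.
have s_in_span : ip (res - w) (d s) = ip (res - w) (\sum_(i <- I) b i *: d i).
  apply/eqP; rewrite -subr_eq0 -(ipBr hip) /res addrC addKr (ipC hip) (ip_sumr hip).
  by rewrite big1_seq // => l /andP[_ lI]; rewrite (ipZr hip) b_orth ?mulr0.
have -> : ip res (d s) =
    ip w (d s) + \sum_(i <- I) b i * (ip res (d i) - ip w (d i)).
  rewrite -[ip res _](subrK (ip w (d s))) -(ipBl hip) s_in_span (ip_sumr hip) addrC.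
  by congr (_ + _); apply: eq_bigr => i _; rewrite (ipZr hip) (ipBl hip).
apply: (le_trans (ler_normD _ _)); apply: lerD => //.
rewrite mulr_suml; apply: (le_trans (ler_norm_sum _ _ _)); rewrite big_seq.
rewrite [X in _ <= X]big_seq; apply: ler_sum => i iI.
rewrite normrM; apply: ler_wpM2l => //.
by apply: (le_trans (ler_normB _ _)); apply: lerD; [apply: res_le | apply: w_le].
Qed.

End Coherence.

Section OMP.
Variables (R : realType) (B H : normedModType R) (ip : H -> H -> R).
Hypothesis hip : is_inner_product ip.
Variables (K : {linear B -> H}) (e : int -> B).
Hypotheses (Kinj : injective K) (e_unit : forall i, `|e i| = 1).
Local Notation d := (dict K e).

Lemma normK_gt0 i : 0 < `|K (e i)|.
Proof.
rewrite normr_gt0; apply: contra_neq (oner_neq0 R) => Ke0.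
have ei0 : e i = 0 by apply: Kinj; rewrite Ke0 linear0.
by rewrite -(e_unit i) ei0 normr0.
Qed.

Lemma K_dict i : K (e i) = `|K (e i)| *: d i.
Proof. by rewrite /dict scalerA divff ?scale1r // gt_eqF ?normK_gt0. Qed.

Lemma dict_unit i : `|d i| = 1.
Proof.
by rewrite /dict normrZ ger0_norm ?invr_ge0 // mulVf // gt_eqF ?normK_gt0.
Qed.

Lemma K_sum_dict (s : seq int) (c : int -> R) :
  K (\sum_(i <- s) c i *: e i) = \sum_(i <- s) (c i * `|K (e i)|) *: d i.
Proof.
by rewrite raddf_sum; apply: eq_bigr => i _; rewrite -scalerA -K_dict; exact: linearZ.
Qed.

Variables (alpha : int -> R) (I : seq int).
Hypotheses (uI : uniq I) (I_neq0 : I != [::])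
           (supp_alpha : forall i, (i \in I) = (alpha i != 0)).
Local Notation mu := (cumcoh ip d I).
Local Notation v := (K (\sum_(i <- I) alpha i *: e i)).

Variables (eps : R) (veps : H).
Local Notation w := (veps - v).
Local Notation nu := (sup (range (fun i => `|ip w (d i)|))).
Local Notation A := (inf [set `|alpha i| * `|K (e i)| | i in [set i | i \in I]]).
Local Notation r := (nsr ip K e alpha I w).

Lemma noise_ip_le_sup i : `|ip w (d i)| <= nu.
Proof.
apply: ub_le_sup; last by exists i.
by exists `|w| => _ [j _ <-]; apply: ip_unit_le hip _ _ (dict_unit j).
Qed.

Lemma inf_amplitude_le i : i \in I -> A <= `|alpha i| * `|K (e i)|.
Proof.
move=> iI; apply: ge_inf; last by exists i.
by exists 0 => _ [j _ <-]; rewrite mulr_ge0.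
Qed.

Lemma inf_amplitude_gt0 : 0 < A.
Proof.
have [m mI hm] := exists_argmax_seq (fun i => - (`|alpha i| * `|K (e i)|)) I_neq0.
have : `|alpha m| * `|K (e m)| <= A.
  apply: lb_le_inf; first by exists (`|alpha m| * `|K (e m)|), m.
  by move=> _ [j jI <-]; have := hm j jI; rewrite lerN2.
by apply: lt_le_trans; rewrite mulr_gt0 ?normK_gt0 // normr_gt0 -supp_alpha.
Qed.

Hypotheses (noise_le : `|w| <= eps) (mu_lt1 : mu < 1)
           (erc : (erc_sup ip d I < (1 - 2 * r * (1 - mu)^-1)%:E)%E).

Lemma pinv_l1_lt j : j \notin I ->
  \sum_(i <- I) `|Defs.pinv ip d I (d j) i| < 1 - 2 * r / (1 - mu).
Proof.
move=> jI; rewrite -lte_fin -(l1norm_seq uI); last by case: (pinvP hip d (d j) uI).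
by apply: le_lt_trans erc; apply: ereal_sup_ubound; exists j.
Qed.

Variables (n : nat) (idx : seq int) (beta : nat -> int -> R).
Hypothesis run : OMP_run ip K e eps veps n idx beta.
Local Notation res k := (veps - K (\sum_(i <- undup (take k idx)) beta k i *: e i)).

Lemma omp_residual_on_support k : (k <= n)%N -> {subset take k idx <= I} ->
  res k = w + \sum_(l <- I) ((alpha l - beta k l) * `|K (e l)|) *: d l.
Proof.
case: run => _ beta_supp _ _ _ le_kn sub_TI.
rewrite (big_uniq_subset (undup_uniq _) uI); first last.
- by move=> l _; rewrite mem_undup => /beta_supp ->; rewrite ?scale0r.
- by move=> l; rewrite mem_undup => /sub_TI.
rewrite !K_sum_dict.
under [X in _ = _ + X]eq_bigr => l _ do rewrite mulrBl scalerBl.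
by rewrite sumrB addrA subrK.
Qed.

(* If all of I were selected, the minimality of the iterate compared with the
   coefficients alpha would give ||res k|| <= ||v^eps - v|| <= eps, so OMP
   would have stopped. *)
Lemma omp_unselected_exists k : (k < n)%N -> {subset take k idx <= I} ->
  exists2 i0, i0 \in I & i0 \notin take k idx.
Proof.
case: run => _ _ [res_gt _] _ res_min lt_kn sub_TI.
have [all_sel|] := boolP (all (mem (take k idx)) I); last by move/allPn.
have k_gt0 : (0 < k)%N.
  rewrite lt0n; apply: contraNneq I_neq0 => k0; move: all_sel.
  by rewrite k0 take0; case: (I) => //= x l; rewrite in_nil.
have := res_min k (introT andP (conj k_gt0 (ltnW lt_kn))) alpha.
rewrite (big_uniq_subset (F := fun i => alpha i *: e i) (undup_uniq _) uI); first last.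
- by move=> l lI; rewrite mem_undup => /negP[]; apply: (allP all_sel).
- by move=> l; rewrite mem_undup => /sub_TI.
move=> res_le_w; exfalso; have := res_gt k lt_kn; have := noise_le.
by have := normr_ge0 (res k); have := normr_ge0 w; nra.
Qed.

(* The selection step: an index s outside I would correlate with the residual
   at least as much as every d_i with i in I, which the two coherence bounds
   rule out. *)
Lemma omp_selects_in_support k : (k <= n)%N -> {subset take k idx <= I}.
Proof.
elim: k => [_ t|k IH lt_kn t]; first by rewrite take0.
have sub_TI := IH (ltnW lt_kn).
case: run => size_idx beta_supp _ sel_max _.
rewrite (take_nth 0) ?size_idx // mem_rcons in_cons => /orP[/eqP ->|/sub_TI//].
set s := nth 0 idx k; apply/negPn/negP => sI.
have [i0 i0I i0T] := omp_unselected_exists lt_kn sub_TI.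
set g := fun l => (alpha l - beta k l) * `|K (e l)|.
have res_eq := omp_residual_on_support (ltnW lt_kn) sub_TI.
set Q := `|ip (res k) (d s)|.
have res_le i : i \in I -> `|ip (w + \sum_(l <- I) g l *: d l) (d i)| <= Q.
  by move=> _; rewrite -res_eq; apply: sel_max.
have noise_le_nu i : i \in I -> `|ip w (d i)| <= nu by move=> _; apply: noise_ip_le_sup.
have lower : (1 - mu) * `|g i0| <= Q + nu.
  exact: (cumcoh_coef_le_noisy hip uI (fun i _ => dict_unit i) (ltW mu_lt1)
            noise_le_nu res_le i0I).
set E := \sum_(i <- I) `|Defs.pinv ip d I (d s) i|.
have upper : Q <= nu + E * (Q + nu).
  have := pinv_ip_le hip (pinvP hip d (d s) uI) noise_le_nu (noise_ip_le_sup s) res_le.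
  by rewrite -res_eq.
have g_i0 : `|g i0| = `|alpha i0| * `|K (e i0)|.
  by rewrite /g beta_supp ?subr0 ?normrM ?normr_id // ltnW.
have A_le := inf_amplitude_le i0I.
have A_gt0 := inf_amplitude_gt0.
have mu_gt0 : 0 < 1 - mu by rewrite subr_gt0.
have nu_eq : nu = r * A by rewrite /nsr divfK // gt_eqF.
have r_ge0 : 0 <= r.
  by apply: divr_ge0; [exact: le_trans (normr_ge0 _) (noise_ip_le_sup 0) | exact: ltW].
have E_ge0 : 0 <= E by apply: sumr_ge0.
have E_lt : (1 - mu) * E < (1 - mu) - 2 * r.
  by have := pinv_l1_lt sI; rewrite -(ltr_pM2l mu_gt0) mulrBr mulr1 mulrCA divff ?gt_eqF ?mulr1.
rewrite g_i0 nu_eq in lower upper.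
have lower_A : (1 - mu) * A - r * A <= Q.
  by have := ler_wpM2l (ltW mu_gt0) A_le; lra.
have E_le1 : 0 <= 1 - E by nra.
have := ler_wpM2r E_le1 lower_A.
have : 0 < A * ((1 - mu) * (1 - E) - 2 * r) by apply: mulr_gt0 => //; lra.
by nra.
Qed.

Lemma omp_coef_error :
  \sum_(i <- I) `|beta n i - alpha i|
    <= 2 / (1 - mu) * (\sum_(i <- I) `|K (e i)|^-1) * eps.
Proof.
have sub_TI := omp_selects_in_support (leqnn n).
have [_ _ [_ res_le] _ _] := run.
set g := fun l => (alpha l - beta n l) * `|K (e l)|.
have sum_le : `|\sum_(l <- I) g l *: d l| <= eps + eps.
  rewrite -[X in `|X|](addKr w) -(omp_residual_on_support (leqnn n) sub_TI).
  by apply: (le_trans (ler_normD _ _)); rewrite normrN lerD.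
have mu_gt0 : 0 < 1 - mu by rewrite subr_gt0.
rewrite mulrAC mulr_sumr big_seq [X in _ <= X]big_seq; apply: ler_sum => l lI.
have nk_gt0 := normK_gt0 l.
have := cumcoh_coef_le hip uI (fun i _ => dict_unit i) (ltW mu_lt1)
  (fun i _ => le_trans (ip_unit_le hip _ (dict_unit i)) sum_le) lI.
rewrite /g normrM (gtr0_norm nk_gt0) distrC => coef_le.
have -> : 2 / (1 - mu) * eps * `|K (e l)|^-1 = (eps + eps) / ((1 - mu) * `|K (e l)|).
  by field; rewrite ?gt_eqF.
by rewrite ler_pdivlMr ?mulr_gt0 //; lra.
Qed.

End OMP.

Theorem proposition12 (R : realType) (B H : completeNormedModType R)
  (ip : H -> H -> R) (hip : is_inner_product ip)
  (K : {linear B -> H})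
  (Kbdd : exists M : R, forall x : B, `|K x| <= M * `|x|)
  (Kinj : injective K)
  (e : int -> B) (he : forall i, `|e i| = 1)
  (alpha : int -> R) (I : seq int) (Iuniq : uniq I) (Ine : I != [::])
  (hI : forall i, (i \in I) = (alpha i != 0)) :
  exists C : R, 0 < C /\
  forall (eps : R) (veps : H),
    let u := \sum_(i <- I) alpha i *: e i in
    let v := K u in
    let d := dict K e in
    let r := nsr ip K e alpha I (veps - v) in
    let mu := cumcoh ip d I in
    `|veps - v| <= eps ->
    r < 2^-1 ->
    mu < 1 ->
    (erc_sup ip d I < (1 - 2 * r * (1 - mu)^-1)%R%:E)%E ->
    forall (n : nat) (idx : seq int) (beta : nat -> int -> R),
      OMP_run ip K e eps veps n idx beta ->
      (l1norm (fun i => (beta n i - alpha i)%R) <= (C * eps)%R%:E)%E.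
Proof.
set mu := cumcoh ip (dict K e) I.
set C0 := 2 / (1 - mu) * \sum_(i <- I) `|K (e i)|^-1.
exists (if mu < 1 then C0 + 1 else 1); split.
  case: ifPn => // mu_lt1; rewrite ltr_wpDl // mulr_ge0 ?divr_ge0 ?subr_ge0 ?(ltW mu_lt1) //.
  by apply: sumr_ge0 => i _; rewrite invr_ge0.
move=> eps veps u v d r mu' noise_le _ mu_lt1 erc n idx beta run.
have sub_idx_I := omp_selects_in_support hip Kinj he Iuniq Ine hI noise_le mu_lt1 erc
  run (leqnn n).
have err_supp i : i \notin I -> beta n i - alpha i = 0.
  case: run => size_idx beta_supp _ _ _ iI.
  rewrite beta_supp //; last by apply: contra iI => /sub_idx_I.
  by move: iI; rewrite hI negbK => /eqP ->; rewrite subrr.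
have eps_ge0 : 0 <= eps := le_trans (normr_ge0 _) noise_le.
rewrite (l1norm_seq Iuniq err_supp) lee_fin ifT //.
apply: le_trans (omp_coef_error hip Kinj he Iuniq Ine hI noise_le mu_lt1 erc run) _.
by rewrite ler_wpM2r ?lerDl.
Qed.
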